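(* Let $K\ge2$, let the ground-truth clusters $\mathcal{C}_1,\dots,\mathcal{C}_K$ have size $N/K$ each, let $\mathcal{R}$ satisfy Assumption 1, and let $1\ge p\ge q\ge r\ge s\ge0$. Define $\tilde{\mathcal{A}}\in\mathbb{R}^{N\times N}$ by $\tilde{\mathcal{A}}_{ii}=p$ and, for $i\neq j$, $\tilde{\mathcal{A}}_{ij}=p$ if $\pi(v_i)=\pi(v_j)$, $R_{ij}=1$; $q$ if $\pi(v_i)\neq\pi(v_j)$, $R_{ij}=1$; $r$ if $\pi(v_i)=\pi(v_j)$, $R_{ij}=0$; $s$ if $\pi(v_i)\neq\pi(v_j)$, $R_{ij}=0$. With $\mathbf{u}_1,\dots,\mathbf{u}_{K-1}$ defined by $u_{ki}=1$ if $v_i\in\mathcal{C}_k$ and $u_{ki}=-\frac1{K-1}$ otherwise, we have $$\tilde{\mathcal{A}}\mathbf{1}=\lambda_1\mathbf{1},\quad \lambda_1=qd+s(N-d)+(p-q)\frac dK+(r-s)\frac{N-d}K,$$ and, for each $k\in[K-1]$, $\tilde{\mathcal{A}}\mathbf{u}_k=\lambda_{1+k}\mathbf{u}_k$ with $\lambda_{1+k}=(p-q)\frac dK+(r-s)\frac{N-d}K$.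
   Context: $\mathcal{V}=\{v_1,\dots,v_N\}$, $\pi:\mathcal{V}\to[K]$ with $\mathcal{C}_k=\{v_i:\pi(v_i)=k\}$. $\mathcal{R}$ is an undirected graph on $\mathcal{V}$ with symmetric adjacency $\mathbf{R}\in\{0,1\}^{N\times N}$. Assumption 1: $\mathcal{R}$ is $d$-regular for some $K\le d\le N$, $R_{ii}=1$ for all $i$ (self-loops counted in the degree), and each node is adjacent in $\mathcal{R}$ to exactly $d/K$ nodes of $\mathcal{C}_k$ for every $k\in[K]$ (including the self-loop). $\mathbf{1}$ is the all-ones vector. (The matrix $\tilde{\mathcal{A}}$ equals $\mathbb{E}[\mathbf{A}]+p\mathbf{I}$ for $\mathbf{A}$ drawn from the representation-aware SBM with these parameters.) *)

From HB Require Import structures.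
From mathcomp Require Import all_boot all_order all_algebra.
Set Implicit Arguments. Unset Strict Implicit. Unset Printing Implicit Defensive.
Import Order.TTheory GRing.Theory Num.Theory.
Local Open Scope ring_scope.

(* Nodes are 'I_N, clusters are 'I_K (0-indexed), pi : 'I_N -> 'I_K,
   Radj : rel 'I_N is the adjacency relation of the representation graph. *)

Definition assumption1 (N K d : nat) (pi : 'I_N -> 'I_K) (Radj : rel 'I_N) : Prop :=
  [/\ (K <= d <= N)%N,
      (forall i j, Radj i j = Radj j i),
      (forall i, Radj i i),
      (forall i, #|[set j | Radj i j]| = d)
    & (forall i (k : 'I_K), (#|[set j | Radj i j && (pi j == k)]| * K)%N = d)].

(* The expected adjacency matrix plus p I, as defined entrywise in the paper. *)
Definition Atilde (F : pzRingType) (N K : nat) (pi : 'I_N -> 'I_K) (Radj : rel 'I_N)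
    (p q r s : F) : 'M[F]_N :=
  \matrix_(i, j)
    if i == j then p
    else if Radj i j then (if pi i == pi j then p else q)
    else (if pi i == pi j then r else s).

Definition uvec (F : fieldType) (N K : nat) (pi : 'I_N -> 'I_K) (k : 'I_K) : 'cV[F]_N :=
  \col_i (if pi i == k then 1 else - (K.-1%:R)^-1).

(* Every column of the matrix [Atilde] is determined by the cluster and the
   adjacency of its index, and Assumption 1 makes each node see exactly [d/K]
   neighbours and [(N - d)/K] non-neighbours in every cluster.  Hence [Atilde]
   maps the indicator of cluster [k] to the vector that is [alpha] on cluster
   [k] and [beta] elsewhere, for two constants [alpha], [beta].  Summing over
   [k] gives the eigenvalue [alpha + (K - 1) beta] on [1], and since [u_k] is
   an affine combination of the indicator of cluster [k] and of [1], it is an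
   eigenvector with eigenvalue [alpha - beta]. *)
From HB Require Import structures.
From mathcomp Require Import all_boot all_order all_algebra.
From mathcomp Require Import ring.
Set Implicit Arguments. Unset Strict Implicit. Unset Printing Implicit Defensive.
Import Order.TTheory GRing.Theory Num.Theory.
Local Open Scope ring_scope.

Lemma sumr_const_card (R : pzSemiRingType) (T : finType) (P : pred T) (c : R) :
  \sum_(j | P j) c = #|[set j | P j]|%:R * c.
Proof. by rewrite sumr_const cardsE mulr_natl. Qed.

Section ClusterIndicator.

Variables (F : fieldType) (N K : nat) (pi : 'I_N -> 'I_K).

Definition cluster_ind (k : 'I_K) : 'cV[F]_N := \col_i (pi i == k)%:R.

Lemma cluster_indE k i j : cluster_ind k i j = (pi i == k)%:R.
Proof. by rewrite mxE. Qed.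

Lemma uvecE (k : 'I_K) :
  uvec F pi k = cluster_ind k - (K.-1%:R)^-1 *: (const_mx 1 - cluster_ind k).
Proof.
by apply/matrixP => i j; rewrite !mxE; case: (pi i == k) => /=; ring.
Qed.

Variables (M : 'M[F]_N) (alpha beta : F).
Hypothesis M_cluster_ind :
  forall k, M *m cluster_ind k = \col_i (if pi i == k then alpha else beta).

Lemma mul_cluster_const_one :
  M *m (const_mx 1 : 'cV_N) = (alpha + K.-1%:R * beta) *: const_mx 1.
Proof.
have sum_ind : \sum_k cluster_ind k = const_mx 1.
  apply/matrixP => i j; rewrite summxE !mxE (bigD1 (pi i)) //= !mxE eqxx.
  by rewrite big1 ?addr0 // => k /negbTE; rewrite mxE eq_sym => ->.
apply/matrixP => i j; rewrite -[in LHS]sum_ind mulmx_sumr summxE !mxE mulr1.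
under eq_bigr => k _ do rewrite M_cluster_ind mxE.
rewrite (bigD1 (pi i)) //= eqxx.
under eq_bigr => k /negbTE do rewrite eq_sym => ->.
by rewrite sumr_const cardC1 card_ord mulr_natl.
Qed.

Lemma mul_cluster_uvec k :
  (K.-1%:R : F) != 0 -> M *m uvec F pi k = (alpha - beta) *: uvec F pi k.
Proof.
move=> K1_neq0; rewrite !uvecE mulmxBr -scalemxAr mulmxBr.
rewrite M_cluster_ind mul_cluster_const_one.
by apply/matrixP => i j; rewrite !mxE; case: (pi i == k) => /=; field.
Qed.

End ClusterIndicator.

Section AtildeClusters.

Variables (F : numFieldType) (N K d : nat) (pi : 'I_N -> 'I_K) (Radj : rel 'I_N).
Variables (p q r s : F).
Hypothesis balanced : forall k : 'I_K, (#|[set i | pi i == k]| * K)%N = N.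
Hypothesis R_assumption1 : assumption1 d pi Radj.

Lemma AtildeE i j : Radj i i ->
  Atilde pi Radj p q r s i j =
  if Radj i j then (if pi i == pi j then p else q) else (if pi i == pi j then r else s).
Proof. by rewrite mxE; case: eqP => [<- ->|//]; rewrite eqxx. Qed.

Lemma card_nonadj_cluster i k :
  (#|[set j | (pi j == k) && ~~ Radj i j]| * K)%N = (N - d)%N.
Proof.
case: R_assumption1 => _ _ _ _ adj_cluster.
have split_cluster : (#|[set j | Radj i j && (pi j == k)]|
    + #|[set j | (pi j == k) && ~~ Radj i j]|)%N = #|[set j | pi j == k]|.
  rewrite -(cardsID [set j | Radj i j] [set j | pi j == k]).
  by congr (_ + _)%N; apply: eq_card => j; rewrite !inE andbC.
by rewrite -[in RHS](balanced k) -(adj_cluster i k) -split_cluster mulnDl addKn.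
Qed.

Lemma Atilde_mul_cluster_ind k :
  Atilde pi Radj p q r s *m cluster_ind F pi k =
  \col_i (if pi i == k then p * (d%:R / K%:R) + r * ((N - d)%:R / K%:R)
          else q * (d%:R / K%:R) + s * ((N - d)%:R / K%:R)).
Proof.
case: R_assumption1 => _ _ refl _ adj_cluster.
have card_div c n : (c * K)%N = n -> (c%:R : F) = n%:R / K%:R.
  by move=> <-; rewrite natrM mulfK // pnatr_eq0 -lt0n (leq_ltn_trans _ (ltn_ord k)).
apply/matrixP => i j0; rewrite [LHS]mxE.
under eq_bigr => j _ do rewrite (AtildeE _ (refl i)) cluster_indE mulr_natr mulrb.
rewrite mxE.
rewrite -big_mkcond (bigID (fun j => Radj i j)) /=.
have in_cluster j : pi j == k -> (pi i == pi j) = (pi i == k) by move/eqP->.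
under eq_bigr => j /andP[kj ->] do rewrite in_cluster //.
under [X in _ + X]eq_bigr => j /andP[kj /negbTE ->] do rewrite in_cluster //.
have card_adj : (#|[set j | (pi j == k) && Radj i j]|%:R : F) = d%:R / K%:R.
  apply: card_div; rewrite -(adj_cluster i k); congr (_ * _)%N.
  by apply: eq_card => j; rewrite !inE andbC.
rewrite !sumr_const_card card_adj (card_div _ _ (card_nonadj_cluster i k)).
by case: (pi i == k); rewrite mulrC [in X in _ + X]mulrC.
Qed.

End AtildeClusters.

Theorem lemma4 (F : realFieldType) (N K d : nat) (pi : 'I_N -> 'I_K)
    (Radj : rel 'I_N) (p q r s : F) :
  (2 <= K)%N ->
  (forall k : 'I_K, (#|[set i | pi i == k]| * K)%N = N) ->
  assumption1 d pi Radj ->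
  s >= 0 -> r >= s -> q >= r -> p >= q -> 1 >= p ->
  let A := Atilde pi Radj p q r s in
  let lam1 := q * d%:R + s * (N - d)%:R + (p - q) * (d%:R / K%:R)
              + (r - s) * ((N - d)%:R / K%:R) in
  let lamk := (p - q) * (d%:R / K%:R) + (r - s) * ((N - d)%:R / K%:R) in
  A *m (const_mx 1 : 'cV[F]_N) = lam1 *: (const_mx 1 : 'cV[F]_N) /\
  (forall k : 'I_K, (k < K.-1)%N -> A *m uvec F pi k = lamk *: uvec F pi k).
Proof.
(* Neither the ordering of p, q, r, s nor the bound k < K.-1 is needed; the
   latter only makes the u_k linearly independent. *)
move=> K_ge2 balanced R_assumption1 _ _ _ _ _ A lam1 lamk.
have A_cluster_ind := Atilde_mul_cluster_ind p q r s balanced R_assumption1.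
have K_neq0 : (K%:R : F) != 0 by rewrite pnatr_eq0 -lt0n ltnW.
have K1_neq0 : (K.-1%:R : F) != 0 by rewrite pnatr_eq0 -lt0n -ltnS prednK // ltnW.
have K1_eq : (K.-1%:R : F) = K%:R - 1 by rewrite -[in RHS](prednK (ltnW K_ge2)) -natr1 addrK.
split.
  rewrite /A (mul_cluster_const_one A_cluster_ind); congr (_ *: _).
  by rewrite /lam1 K1_eq; field.
move=> k _; rewrite /A (mul_cluster_uvec A_cluster_ind) //; congr (_ *: _).
by rewrite /lamk; ring.
Qed.
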